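(* Let $\mathrm{M}$ be a loopless matroid on a finite set $E$ with lattice of flats $\mathcal{L}$, and let $\vartriangleleft$ be a total order on $E$. For every $F\in\mathcal{L}$: (i) $C_\vartriangleleft(F,\hat1)=\{F\vee H: H\in C_\vartriangleleft(\hat0,\hat1)\}$; (ii) $C_\vartriangleleft(\hat0,\hat1)\cap[\hat0,F]\subseteq C_\vartriangleleft(\hat0,F)$.
   Context: Flats are ordered by inclusion, $\hat0=\varnothing$, $\hat1=E$, $F\vee H=\operatorname{cl}_{\mathrm{M}}(F\cup H)$. For flats $F\leqslant G$, writing $G\setminus F=\{e_1\vartriangleleft e_2\vartriangleleft\dots\vartriangleleft e_k\}$ and $F_i=\operatorname{cl}_{\mathrm{M}}(F\cup\{e_1,\dots,e_i\})$, the $\vartriangleleft$-chain from $F$ to $G$ is the set of flats $C_\vartriangleleft(F,G)=\{F,F_1,F_2,\dots,F_k=G\}$. *)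

From mathcomp Require Import all_boot.
Set Implicit Arguments. Unset Strict Implicit. Unset Printing Implicit Defensive.

Record matroid (T : finType) := Matroid {
  indep : pred {set T};
  indep0 : indep set0;
  indep_sub : forall A B : {set T}, A \subset B -> indep B -> indep A;
  indep_aug : forall A B : {set T}, indep A -> indep B -> #|A| < #|B| ->
    exists2 x, x \in B :\: A & indep (x |: A)
}.

Section MatroidDefs.
Variables (T : finType) (M : matroid T).

Definition mrank (A : {set T}) : nat :=
  \max_(I : {set T} | indep M I && (I \subset A)) #|I|.

Definition mcl (A : {set T}) : {set T} :=
  [set x | mrank (x |: A) == mrank A].

Definition flat (A : {set T}) : bool := mcl A == A.

Definition loopless : Prop := forall e : T, indep M [set e].

Definition total_order (le : rel T) : Prop :=
  [/\ reflexive le, antisymmetric le, transitive le & total le].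

(* The le-chain from F to G: with G \ F = {e_1 < ... < e_k} and
   F_i = cl(F u {e_1..e_i}), C(F,G) = {F, F_1, ..., F_k}. *)
Definition lchain (le : rel T) (F G : {set T}) : {set {set T}} :=
  let s := sort le (enum (G :\: F)) in
  F |: [set mcl (F :|: [set x in take i.+1 s]) | i : 'I_(size s)].

End MatroidDefs.

From mathcomp Require Import all_boot zify.
Set Implicit Arguments. Unset Strict Implicit. Unset Printing Implicit Defensive.

(* For a flat F, the chain C(F, G) consists exactly of the flats
   cl(F u P), P ranging over the initial segments of G \ F in the order <|;
   looplessness makes the empty set a flat, so C(0, G) consists of the
   cl(P), P ranging over the initial segments of G.
   (i) Adding F to an initial segment of G gives F together with an initial
   segment of G \ F, and conversely; since cl(F u cl(P)) = cl(F u P), the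
   two chains have the same members.
   (ii) If cl(P) is contained in F, so is the initial segment P of G, which
   is then also an initial segment of F. *)

Section Rank.
Variables (T : finType) (M : matroid T).
Local Notation r := (mrank M).

Lemma leq_card_mrank (I A : {set T}) : indep M I -> I \subset A -> #|I| <= r A.
Proof.
move=> indI sIA; rewrite /mrank.
by apply: (leq_bigmax_cond (P := fun J => indep M J && (J \subset A))); rewrite indI.
Qed.

Lemma ltn_card_mrank (I A : {set T}) x :
  indep M (x |: I) -> x \notin I -> x |: I \subset A -> #|I| < r A.
Proof. by move=> indxI xI /(leq_card_mrank indxI); rewrite cardsU1 xI. Qed.

Lemma mrank_basis (A : {set T}) :
  exists I, [/\ indep M I, I \subset A & #|I| = r A].
Proof.
have nonempty : 0 < #|[pred I : {set T} | indep M I && (I \subset A)]|.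
  by apply/card_gt0P; exists set0; rewrite inE indep0 sub0set.
have [I /andP [indI sIA] cardI] := eq_bigmax_cond (fun I : {set T} => #|I|) nonempty.
by exists I; rewrite /mrank cardI.
Qed.

Lemma mrank0 : r set0 = 0.
Proof.
have [I [_ ]] := mrank_basis set0.
by rewrite subset0 => /eqP -> <-; rewrite cards0.
Qed.

Lemma mrankS (A B : {set T}) : A \subset B -> r A <= r B.
Proof.
move=> sAB; have [I [indI sIA <-]] := mrank_basis A.
exact: leq_card_mrank (subset_trans sIA sAB).
Qed.

Lemma indep_extend (I B : {set T}) : indep M I -> I \subset B ->
  exists J, [/\ indep M J, I \subset J, J \subset B & #|J| = r B].
Proof.
have [k] := ubnP (r B - #|I|); elim: k I => // k IH I lt_k indI sIB.
have [le_rI | lt_Ir] := leqP (r B) #|I|.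
  by exists I; split=> //; apply/eqP; rewrite eqn_leq le_rI leq_card_mrank.
have [J0 [indJ0 sJ0B cardJ0]] := mrank_basis B.
have [x /setDP [xJ0 xI] indxI] : exists2 x, x \in J0 :\: I & indep M (x |: I).
  by apply: indep_aug; rewrite ?cardJ0.
have sxIB : x |: I \subset B.
  by rewrite subUset sub1set sIB andbT (subsetP sJ0B).
have [|J [indJ sxIJ sJB cardJ]] := IH (x |: I) _ indxI sxIB.
  by rewrite cardsU1 xI; lia.
by exists J; split=> //; apply: subset_trans sxIJ; apply: subsetUr.
Qed.

(* A set X that does not raise the rank of Y does not raise the rank of any
   Y u Z either: otherwise a basis of Y u Z, extended from one of Y, could be
   augmented by an element of X, which would then also augment the basis of Y. *)
Lemma mrank_absorb (Y X Z : {set T}) :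
  r (Y :|: X) = r Y -> r (Y :|: X :|: Z) = r (Y :|: Z).
Proof.
move=> rYX; apply/eqP; rewrite eqn_leq [r (Y :|: Z) <= _]mrankS ?andbT;
  last exact: setSU _ (subsetUl Y X).
rewrite leqNgt; apply/negP => lt_r.
have [I0 [indI0 sI0Y cardI0]] := mrank_basis Y.
have [I1 [indI1 sI0I1 sI1YZ cardI1]] :=
  indep_extend indI0 (subset_trans sI0Y (subsetUl Y Z)).
have [J [indJ sJ cardJ]] := mrank_basis (Y :|: X :|: Z).
have [x /setDP [xJ xI1] indxI1] : exists2 x, x \in J :\: I1 & indep M (x |: I1).
  by apply: indep_aug; rewrite ?cardI1 ?cardJ.
have xYZ : x \notin Y :|: Z.
  apply/negP => xYZ; have sxI1 : x |: I1 \subset Y :|: Z by rewrite subUset sub1set xYZ.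
  by have := ltn_card_mrank indxI1 xI1 sxI1; rewrite cardI1 ltnn.
have xX : x \in X.
  by move: (subsetP sJ x xJ); rewrite -setUA setUCA in_setU (negbTE xYZ) orbF.
have indxI0 : indep M (x |: I0) := indep_sub (setUS _ sI0I1) indxI1.
have xI0 : x \notin I0 := contra (subsetP sI0I1 x) xI1.
have sxI0 : x |: I0 \subset Y :|: X.
  by rewrite subUset sub1set inE xX orbT (subset_trans sI0Y (subsetUl _ _)).
by have := ltn_card_mrank indxI0 xI0 sxI0; rewrite rYX cardI0 ltnn.
Qed.

Lemma sub_mcl (A : {set T}) : A \subset mcl M A.
Proof. by apply/subsetP => x xA; rewrite inE (setUidPr _) // sub1set. Qed.

Lemma mrankU_mcl (B S : {set T}) : S \subset mcl M B -> r (B :|: S) = r B.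
Proof.
move=> sS; rewrite -(set_enum S).
have : {subset enum S <= mcl M B} by move=> x; rewrite mem_enum; apply: (subsetP sS).
elim: (enum S) => [|x s IH] /= sub; first by rewrite set_nil setU0.
have rBx : r (B :|: [set x]) = r B.
  by have := sub x (mem_head x s); rewrite inE setUC => /eqP.
by rewrite set_cons setUA mrank_absorb // IH // => y ys; rewrite sub // inE ys orbT.
Qed.

Lemma mclU_mcl (A B : {set T}) : mcl M (A :|: mcl M B) = mcl M (A :|: B).
Proof.
have mrank_mclU Z : r (mcl M B :|: Z) = r (B :|: Z).
  by rewrite -(setUidPr (sub_mcl B)) mrank_absorb // mrankU_mcl.
apply/setP => x; rewrite !inE [x |: _]setUA ![_ :|: mcl M B]setUC !mrank_mclU.
by rewrite setUCA [A :|: B]setUC.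
Qed.

Lemma loopless_flat0 : loopless M -> flat M set0.
Proof.
move=> lM; apply/eqP/setP => x; rewrite inE in_set0 setU0 mrank0.
by have := leq_card_mrank (lM x) (subxx _); rewrite cards1 lt0n => /negbTE.
Qed.

End Rank.

Lemma filter_take (X : Type) (p : pred X) (s : seq X) n :
  filter p (take n s) = take (count p (take n s)) (filter p s).
Proof. by rewrite -{3}(cat_take_drop n s) filter_cat take_size_cat // size_filter. Qed.

Lemma take_filter_exists (X : Type) (p : pred X) (s : seq X) m :
  exists n, take m (filter p s) = filter p (take n s).
Proof.
elim: s m => [|a s IH] m; first by exists 0.
case: m => [|m]; first by exists 0; rewrite !take0.
case pa: (p a) => /=; rewrite pa /=.
  by have [n ->] := IH m; exists n.+1; rewrite /= pa.
by have [n ->] := IH m.+1; exists n.+1; rewrite /= pa.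
Qed.

Lemma take_filter_all (X : Type) (p : pred X) (s : seq X) n :
  all p (take n s) -> take n (filter p s) = take n s.
Proof.
elim: s n => [|a s IH] [|n] /=; rewrite ?take0 //.
by case/andP=> pa /IH <-; rewrite pa.
Qed.

Section Prefix.
Variables (T : finType) (le : rel T).

Definition lprefix (A : {set T}) (n : nat) : {set T} :=
  [set x in take n (sort le (enum A))].

Hypotheses (le_tr : transitive le) (le_anti : antisymmetric le) (le_total : total le).

Lemma sort_enum_subset (A B : {set T}) : A \subset B ->
  sort le (enum A) = filter (mem A) (sort le (enum B)).
Proof.
move=> sAB; apply: (sorted_eq le_tr le_anti).
- exact: sort_sorted.
- exact/sorted_filter/sort_sorted.
apply: uniq_perm; rewrite ?filter_uniq ?sort_uniq ?enum_uniq // => x.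
rewrite mem_filter !mem_sort !mem_enum /=.
by case xA: (x \in A); rewrite // (subsetP sAB).
Qed.

Lemma setU_lprefix_setD (A B X : {set T}) :
  (exists n, X = B :|: lprefix A n) <-> (exists m, X = B :|: lprefix (A :\: B) m).
Proof.
rewrite /lprefix (sort_enum_subset (subsetDl A B)); set s := sort le (enum A).
have dropB t : {subset t <= s} ->
    B :|: [set x in t] = B :|: [set x in filter (mem (A :\: B)) t].
  move=> sts; apply/setP => y; rewrite !inE mem_filter !inE.
  case: (y \in B) => //=; case yt: (y \in t); rewrite ?andbF //.
  by have := sts y yt; rewrite mem_sort mem_enum => ->.
split=> [[n ->] | [m ->]].
  exists (count (mem (A :\: B)) (take n s)).
  by rewrite -filter_take dropB // => x /mem_take.
have [n ->] := take_filter_exists (mem (A :\: B)) s m.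
by exists n; rewrite [RHS]dropB // => x /mem_take.
Qed.

Lemma lprefix_subset (A B : {set T}) n :
  B \subset A -> lprefix A n \subset B -> lprefix A n = lprefix B n.
Proof.
move=> sBA sPB; rewrite /lprefix (sort_enum_subset sBA) take_filter_all //.
by apply/allP => x xt; apply: (subsetP sPB); rewrite inE.
Qed.

End Prefix.

Section Chain.
Variables (T : finType) (M : matroid T) (le : rel T).

Lemma lchain_flatP (F G H : {set T}) : flat M F ->
  reflect (exists n, H = mcl M (F :|: lprefix le (G :\: F) n)) (H \in lchain M le F G).
Proof.
move/eqP=> clF; rewrite /lchain /lprefix /=; set s := sort le (enum (G :\: F)).
apply: (iffP setU1P) => [[-> | /imsetP [i _ ->]] | [n ->]].
- by exists 0; rewrite take0 set_nil setU0 clF.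
- by exists i.+1.
have := geq_minr n (size s).
rewrite -[s in take n s]take_size -take_min; case: (minn n _) => [_ | k lt_ks].
  by left; rewrite take0 set_nil setU0 clF.
by right; apply/imsetP; exists (Ordinal lt_ks).
Qed.

Hypothesis lM : loopless M.

Lemma lchain0P (G H : {set T}) :
  reflect (exists n, H = mcl M (lprefix le G n)) (H \in lchain M le set0 G).
Proof.
by apply: (iffP (lchain_flatP _ _ (loopless_flat0 lM))) => [] [n ->];
  exists n; rewrite set0U setD0.
Qed.

Hypotheses (le_tr : transitive le) (le_anti : antisymmetric le) (le_total : total le).

Lemma lchain0_subset (F G : {set T}) : F \subset G ->
  [set H in lchain M le set0 G | H \subset F] \subset lchain M le set0 F.
Proof.
move=> sFG; apply/subsetP => H; rewrite inE.
case/andP=> /lchain0P [n ->] sHF; apply/lchain0P; exists n.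
rewrite (lprefix_subset le_tr le_anti le_total sFG) //.
exact: subset_trans (sub_mcl _ _) sHF.
Qed.

Lemma lchain_join (F G : {set T}) : flat M F ->
  lchain M le F G = [set mcl M (F :|: H) | H in lchain M le set0 G].
Proof.
move=> flF; apply/setP => H.
apply/(lchain_flatP _ _ flF)/imsetP => [[m ->] | [H0 /lchain0P [n ->] ->]].
  have [n eqFP] : exists n, F :|: lprefix le (G :\: F) m = F :|: lprefix le G n.
    by apply/(setU_lprefix_setD le_tr le_anti le_total G F); exists m.
  exists (mcl M (lprefix le G n)); first by apply/lchain0P; exists n.
  by rewrite mclU_mcl eqFP.
have [m eqFP] : exists m, F :|: lprefix le G n = F :|: lprefix le (G :\: F) m.
  by apply/(setU_lprefix_setD le_tr le_anti le_total G F); exists n.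
by exists m; rewrite mclU_mcl eqFP.
Qed.

End Chain.

Theorem lemma3p4 (T : finType) (M : matroid T) (le : rel T) :
  loopless M -> total_order le ->
  forall F : {set T}, flat M F ->
    lchain M le F setT = [set mcl M (F :|: H) | H in lchain M le set0 setT]
    /\ [set H in lchain M le set0 setT | H \subset F] \subset lchain M le set0 F.
Proof.
move=> lM [_ le_anti le_tr le_total] F flF; split.
  exact: lchain_join.
exact: lchain0_subset (subsetT F).
Qed.
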